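(* Let $P[1..m]$ and $S[1..m]$ be strings of the same length $m$ over a totally ordered alphabet. Then $CT(P)=CT(S)$ if and only if $S[\mathcal{GP}_P(i)]\preceq S[i]$ for all $1\le i\le m$.
   Context: A string $S$ is a finite sequence $S[1],S[2],\dots$ over an alphabet $\Sigma$ with a total order $<$; $S[i..j]$ denotes the substring $S[i]\cdots S[j]$ (empty if $i>j$). For positions $i,j$ of $S$, write $S[i]\prec S[j]$ iff either $S[i]<S[j]$, or $S[i]$ and $S[j]$ have the same value and $i<j$; write $S[i]\preceq S[j]$ iff $S[i]\prec S[j]$ or $i=j$. Minimum elements are taken with respect to $\prec$ (leftmost among equal minimal values). Cartesian tree $CT(S)$ of $S[1..n]$: if $S$ is empty, $CT(S)$ is the empty tree; otherwise, if $S[i]$ is the minimum of $S$, $CT(S)$ is the binary tree with root $S[i]$, left subtree $CT(S[1..i-1])$ and right subtree $CT(S[i+1..n])$. Two Cartesian trees are equal when they are equal as (unlabeled, ordered) binary tree shapes. Prefix-parent representation: $\mathcal{PP}_S(i)=\max\{j: 1\le j<i,\ S[j]\prec S[i]\}$ if such $j$ exists, and $\mathcal{PP}_S(i)=i$ otherwise. Prefix-child representation: $\mathcal{PC}_S(1)=1$, and for $i\ge 2$: if $\mathcal{PP}_S(i)=i$, then $\mathcal{PC}_S(i)$ is the index $j\in[1,i-1]$ such that $S[j]$ is the minimum of $S[1..i-1]$; if $\mathcal{PP}_S(i)=i-1$, then $\mathcal{PC}_S(i)=i$; if $\mathcal{PP}_S(i)<i-1$, then $\mathcal{PC}_S(i)$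 is the index $j$ with $\mathcal{PP}_S(i)<j<i$ such that $S[j]$ is the minimum of $S[\mathcal{PP}_S(i)+1..i-1]$. Global-parent representation: $\mathcal{GP}_S(i)=j$ if there is an index $j>i$ with $\mathcal{PC}_S(j)=i$ (there is at most one such $j$), and $\mathcal{GP}_S(i)=\mathcal{PP}_S(i)$ otherwise. *)

(* Strings over a totally ordered alphabet T : orderType d
   are represented as functions S : nat -> T, of which only the positions
   1..m (1-based, as in the paper) are relevant. *)
From mathcomp Require Import all_boot all_order.
Set Implicit Arguments. Unset Strict Implicit. Unset Printing Implicit Defensive.
Import Order.TTheory.
Local Open Scope order_scope.

Section Defs.
Context {d : Order.disp_t} {T : orderType d}.

Definition prec (S : nat -> T) (i j : nat) : bool :=
  (S i < S j) || ((S i == S j) && (i < j)%N).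

Definition preceq (S : nat -> T) (i j : nat) : bool :=
  prec S i j || (i == j).

(* index of the minimum (w.r.t. ≺) of S[lo .. lo+n-1]; lo if n = 0 *)
Definition argmin (S : nat -> T) (lo n : nat) : nat :=
  foldl (fun cur k => if prec S k cur then k else cur) lo (iota lo n).

Inductive tree : Type := Leaf | Node of tree & tree.

Fixpoint ct_fuel (fuel : nat) (S : nat -> T) (lo n : nat) : tree :=
  match fuel with
  | 0 => Leaf
  | fuel'.+1 =>
      if n is 0 then Leaf else
      let i := argmin S lo n in
      Node (ct_fuel fuel' S lo (i - lo)) (ct_fuel fuel' S i.+1 (lo + n - i.+1))
  end.

Definition CT (S : nat -> T) (m : nat) : tree := ct_fuel m S 1 m.

(* prefix-parent: max {j : 1 <= j < i, S[j] ≺ S[i]}, or i if none *)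
Definition PP (S : nat -> T) (i : nat) : nat :=
  foldl (fun acc j => if prec S j i then j else acc) i (iota 1 i.-1).

Definition PC (S : nat -> T) (i : nat) : nat :=
  if i == 1 then 1 else
  let p := PP S i in
  if p == i then argmin S 1 i.-1
  else if p == i.-1 then i
  else argmin S p.+1 (i.-1 - p).

Definition GP (S : nat -> T) (m i : nat) : nat :=
  let js := [seq j <- iota i.+1 (m - i) | PC S j == i] in
  if js is j :: _ then j else PP S i.

End Defs.

From mathcomp Require Import all_boot all_order zify.
Set Implicit Arguments. Unset Strict Implicit. Unset Printing Implicit Defensive.
Import Order.TTheory.

(* Positions are compared by the strict total order ≺, so every nonempty range
   has a unique ≺-minimum (argmin), and the Cartesian tree is the recursive
   decomposition of [1, m] by range minima.  The heart of the proof is a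
   description of the global parent g = GP_P(x) of x, obtained from those of
   the prefix parent and prefix child through the "window" of a position:
   either x is the minimum of P[1..m] (GP_root), or g ≺ x with x ≺ everything
   strictly between x and g (GP_parent), and every position ≺ x is screened
   from x by some position ⪯ g (GP_shield).  Thus g is the parent of x in CT(P).

   (=>) Equal Cartesian trees have equal range minima on every subrange
   (ct_rmq); g is the P-minimum of the range between x and g (GP_argmin), so it
   is the S-minimum as well, whence S[g] ⪯ S[x].
   (<=) Ranges spanned by subtrees of CT(P) are "bordered"; global parents never
   leave a bordered range (GP_in_bordered), so following them down from any x
   reaches the P-minimum r of the range, and the heap condition gives r ⪯ x in S
   (bordered_min_heap).  Hence both trees have the same root on every bordered
   range, and they coincide by induction (bordered_ct). *)

Section Order.
Variables (d : Order.disp_t) (T : orderType d).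
Implicit Types X : nat -> T.

Lemma precxx X i : prec X i i = false.
Proof. by rewrite /prec ltxx eqxx ltnn. Qed.

Lemma prec_trans X i j k : prec X i j -> prec X j k -> prec X i k.
Proof.
rewrite /prec => /orP[h1|/andP[/eqP e1 h1]] /orP[h2|/andP[/eqP e2 h2]].
- by rewrite (lt_trans h1 h2).
- by rewrite -e2 h1.
- by rewrite e1 h2.
- by rewrite e1 e2 eqxx (ltn_trans h1 h2) orbT.
Qed.

Lemma prec_asym X i j : prec X i j -> prec X j i -> False.
Proof. by move=> h1 h2; move: (prec_trans h1 h2); rewrite precxx. Qed.

Lemma prec_total X i j : i != j -> prec X i j || prec X j i.
Proof.
move=> ne; rewrite /prec; case: (ltgtP (X i) (X j)) => //= e.
rewrite ?e ?eqxx /=; lia.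
Qed.

Lemma preceqxx X i : preceq X i i.
Proof. by rewrite /preceq eqxx orbT. Qed.

Lemma prec_preceq X i j : prec X i j -> preceq X i j.
Proof. by rewrite /preceq => ->. Qed.

Lemma notprec X i j : ~~ prec X j i -> preceq X i j.
Proof.
case: (eqVneq i j) => [->|ne] h; first exact: preceqxx.
by move: (prec_total X ne); rewrite (negbTE h) orbF /preceq => ->.
Qed.

Lemma preceq_neq X i j : preceq X i j -> i != j -> prec X i j.
Proof. by rewrite /preceq => /orP[//|->]. Qed.

Lemma preceq_prec_False X i j : preceq X i j -> prec X j i -> False.
Proof.
rewrite /preceq => /orP[h1 h2|/eqP ->]; [exact: prec_asym h1 h2|by rewrite precxx].
Qed.

Lemma preceq_trans X i j k : preceq X i j -> preceq X j k -> preceq X i k.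
Proof.
rewrite /preceq => /orP[h1|/eqP ->//] /orP[h2|/eqP <-]; last by rewrite h1.
by rewrite (prec_trans h1 h2).
Qed.

Lemma preceq_antisym X i j : preceq X i j -> preceq X j i -> i = j.
Proof.
case: (eqVneq i j) => // ne hij hji.
by case: (preceq_prec_False hji (preceq_neq hij ne)).
Qed.

Lemma foldl_argmin X c a n :
  let r := foldl (fun cur k => if prec X k cur then k else cur) c (iota a n) in
  (r = c \/ a <= r < a + n) /\ preceq X r c /\
  (forall k, a <= k < a + n -> preceq X r k).
Proof.
elim: n a c => [|n IH] a c /=.
  by split; [left|split; [apply: preceqxx|move=> k; lia]].
set c' := if prec X a c then a else c.
have hc' : preceq X c' c /\ preceq X c' a.
  rewrite /c'; case: ifP => h; first by split; [apply: prec_preceq|apply: preceqxx].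
  by split; [apply: preceqxx|apply: notprec; rewrite h].
have [h1 [h2 h3]] := IH a.+1 c'.
split; last split.
- case: h1 => [->|?]; last by right; lia.
  rewrite /c'; case: ifP => _; [right; lia|by left].
- exact: preceq_trans h2 hc'.1.
- move=> k hk; case: (eqVneq k a) => [->|ne]; first exact: preceq_trans h2 hc'.2.
  apply: h3; lia.
Qed.

Lemma argmin_spec X lo n : 0 < n ->
  lo <= argmin X lo n < lo + n /\
  forall k, lo <= k < lo + n -> preceq X (argmin X lo n) k.
Proof.
move=> n0; have [h1 [_ h3]] := foldl_argmin X lo lo n.
split; last exact: h3.
rewrite /argmin; case: h1 => [->|//]; lia.
Qed.

Lemma argmin_uniq X lo n i : lo <= i < lo + n ->
  (forall k, lo <= k < lo + n -> preceq X i k) -> argmin X lo n = i.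
Proof.
move=> hi hk; have [h1 h2] := argmin_spec X (n:=n) lo ltac:(lia).
apply: preceq_antisym; [exact: h2|exact: hk].
Qed.

Lemma first_smaller_exists X x j : x < j -> prec X j x ->
  exists R, [/\ x < R <= j, prec X R x & forall k, x < k < R -> ~~ prec X k x].
Proof.
move=> hj hp.
have ex : exists n, (x < n) && prec X n x by exists j; rewrite hj hp.
case: (ex_minnP ex) => R /andP[h1 h2] hmin.
exists R; split=> //.
- by rewrite h1 /=; apply: hmin; rewrite hj hp.
- move=> k hk; apply/negP => hkx.
  have := hmin k; rewrite hkx andbT; lia.
Qed.


End Order.

Section Parents.
Variables (d : Order.disp_t) (T : orderType d).
Implicit Types X : nat -> T.

Lemma foldl_PP X i acc a n :
  let r := foldl (fun acc j => if prec X j i then j else acc) acc (iota a n) in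
  (r = acc /\ forall k, a <= k < a + n -> ~~ prec X k i) \/
  (a <= r < a + n /\ prec X r i /\ forall k, r < k < a + n -> ~~ prec X k i).
Proof.
elim: n a acc => [|n IH] a acc /=.
  by left; split=> // k; lia.
case: (IH a.+1 (if prec X a i then a else acc)) => [[-> h]|[h1 [h2 h3]]].
- case: ifP => ha.
  + right; split; first lia. split=> // k hk; apply: h; lia.
  + left; split=> // k hk; case: (eqVneq k a) => [->|ne]; first by rewrite ha.
    apply: h; lia.
- right; split; first lia. split=> // k hk; apply: h3; lia.
Qed.

Lemma PP_spec X i :
  (PP X i = i /\ forall k, 1 <= k < i -> ~~ prec X k i) \/
  (1 <= PP X i < i /\ prec X (PP X i) i /\ forall k, PP X i < k < i -> ~~ prec X k i).
Proof.
rewrite /PP; case: (foldl_PP X i i 1 i.-1) => [[-> h]|[h1 [h2 h3]]].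
- left; split=> // k hk; apply: h; lia.
- right; split; first lia. split=> // k hk; apply: h3; lia.
Qed.

Lemma PP_range X i : 1 <= i -> 1 <= PP X i <= i.
Proof. by move=> hi; case: (PP_spec X i) => [[-> _]|[h _]]; lia. Qed.

(* The window of i is the maximal interval [wlo X i, i) of positions that are
   not ≺ i; it starts right after the prefix parent of i, or at 1 if there is none. *)
Definition wlo (X : nat -> T) (i : nat) : nat :=
  if PP X i == i then 1 else (PP X i).+1.

Lemma wlo_spec X i : 1 <= i ->
  [/\ 1 <= wlo X i <= i, forall k, wlo X i <= k < i -> ~~ prec X k i
    & 1 < wlo X i -> prec X (wlo X i).-1 i].
Proof.
move=> hi; rewrite /wlo; case: (PP_spec X i) => [[-> hnone]|[hp [hpi hnone]]].
- rewrite eqxx; split=> [||//]; [lia | move=> k hk; apply: hnone; lia].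
- rewrite ifN; last by apply/eqP; lia.
  split=> [||_ //]; [lia | move=> k hk; apply: hnone; lia].
Qed.

Lemma wlo_eq X i lo : 1 <= lo <= i ->
  (forall k, lo <= k < i -> ~~ prec X k i) -> (lo = 1 \/ prec X lo.-1 i) ->
  wlo X i = lo.
Proof.
move=> hlo hnot hstart; have [hw hwnot hwstart] := wlo_spec X (i:=i) ltac:(lia).
case: (ltngtP (wlo X i) lo) => // c.
- case: hstart => [|h]; first lia.
  by move: (hwnot lo.-1 ltac:(lia)); rewrite h.
- by move: (hnot (wlo X i).-1 ltac:(lia)); rewrite hwstart //; lia.
Qed.

Lemma PC_window X i : 1 < i ->
  (wlo X i = i /\ PC X i = i) \/
  (wlo X i < i /\ PC X i = argmin X (wlo X i) (i - wlo X i)).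
Proof.
move=> hi; have [hw _ _] := wlo_spec X (i:=i) ltac:(lia).
rewrite /PC ifN; last by apply/eqP; lia.
move: hw; rewrite /wlo; case: (eqVneq (PP X i) i) => [_ | hne] hw.
- by right; split; [lia | congr argmin; lia].
- case: (eqVneq (PP X i) i.-1) => [e | hne'].
  + by left; rewrite e; split; lia.
  + by right; split; [lia | congr argmin; lia].
Qed.

Lemma PC_child X x j : 1 <= x < j -> PC X j = x ->
  [/\ prec X j x, forall k, x < k < j -> prec X x k &
      forall i, 1 <= i < x -> prec X i x -> exists2 k, i <= k < x & prec X k j].
Proof.
move=> hx hPC; have [hw hwnot hwstart] := wlo_spec X (i:=j) ltac:(lia).
case: (PC_window X (i:=j) ltac:(lia)) => [[_ hj]|[hwj hargmin]]; first lia.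
rewrite hPC in hargmin.
have [hxw hmin] := argmin_spec X (wlo X j) (n:=j - wlo X j) ltac:(lia).
rewrite -hargmin in hxw hmin.
split.
- apply: preceq_neq; [apply/notprec/hwnot; lia | apply/eqP; lia].
- move=> k hk; apply: preceq_neq; [apply: hmin; lia | apply/eqP; lia].
- move=> i hi hix; case: (ltnP i (wlo X j)) => hiw.
  + exists (wlo X j).-1; [lia | apply: hwstart; lia].
  + by case: (preceq_prec_False (hmin i ltac:(lia)) hix).
Qed.

Lemma PC_eq X lo x R : 1 <= lo <= x -> x < R -> prec X R x ->
  (forall k, lo <= k < R -> preceq X x k) -> (lo = 1 \/ prec X lo.-1 R) ->
  PC X R = x.
Proof.
move=> hlo hxR hRx hmin hstart.
have hw : wlo X R = lo.
  apply: wlo_eq => //; first lia.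
  move=> k hk; apply/negP => hkR.
  exact: preceq_prec_False (hmin k hk) (prec_trans hkR hRx).
case: (PC_window X (i:=R) ltac:(lia)) => [[hR _]|[_ ->]]; first lia.
rewrite hw; apply: argmin_uniq; first lia.
by move=> k hk; apply: hmin; lia.
Qed.

Lemma first_smaller_after X m x R : 1 <= x -> x < R <= m -> prec X R x ->
  (forall k, x < k < R -> ~~ prec X k x) -> (forall j, x < j <= m -> PC X j != x) ->
  PP X x < x /\ prec X R (PP X x).
Proof.
move=> hx hR hRx hfirst hnochild.
have [hw hwnot hwstart] := wlo_spec X (i:=x) hx.
have hmin : forall k, wlo X x <= k < R -> preceq X x k.
  move=> k hk; case: (ltngtP k x) => c.
  - apply/notprec/hwnot; lia.
  - apply/notprec/hfirst; lia.
  - rewrite c; exact: preceqxx.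
have hnotPC : ~ (wlo X x = 1 \/ prec X (wlo X x).-1 R).
  move=> hstart; move: (hnochild R ltac:(lia)).
  by rewrite (PC_eq (ltac:(lia) : 1 <= wlo X x <= x) (ltac:(lia) : x < R) hRx hmin hstart) eqxx.
have hw1 : 1 < wlo X x.
  by case: (eqVneq (wlo X x) 1) => [e|]; [case: hnotPC; left | lia].
have hPP : PP X x = (wlo X x).-1 by move: hw1; rewrite /wlo; case: eqP.
rewrite hPP; split; first lia.
have /orP[//|h] := prec_total X (i:=R) (j:=(wlo X x).-1) ltac:(apply/eqP; lia).
by case: hnotPC; right.
Qed.


Lemma GP_cases X m x : 1 <= x <= m ->
  (exists2 j, x < j <= m & PC X j = x /\ GP X m x = j) \/
  ((forall j, x < j <= m -> PC X j != x) /\ GP X m x = PP X x).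
Proof.
move=> hx; rewrite /GP.
case E: [seq j <- iota x.+1 (m - x) | PC X j == x] => [|j js].
- right; split=> // j hj; apply/negP => hPC.
  have : j \in [seq j <- iota x.+1 (m - x) | PC X j == x].
    by rewrite mem_filter hPC mem_iota; apply/andP; split; lia.
  by rewrite E.
- left; have : j \in [seq j <- iota x.+1 (m - x) | PC X j == x] by rewrite E mem_head.
  rewrite mem_filter mem_iota => /andP[/eqP hPC hj].
  by exists j; first lia.
Qed.

Lemma GP_root X m x : 1 <= x <= m -> GP X m x = x ->
  forall j, 1 <= j <= m -> preceq X x j.
Proof.
move=> hx; case: (GP_cases X hx) => [[j hj [_ ->]]|[hnochild ->]] hPP; first lia.
have [_ hwnot _] := wlo_spec X (i:=x) ltac:(lia).
have hw1 : wlo X x = 1 by rewrite /wlo hPP eqxx.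
move=> j hj; case: (ltngtP j x) => c.
- apply/notprec/hwnot; lia.
- apply/notprec/negP => hjx.
  have [R [hR hRx hfirst]] := first_smaller_exists c hjx.
  have [] := first_smaller_after (ltac:(lia) : 1 <= x) (ltac:(lia) : x < R <= m)
    hRx hfirst hnochild.
  lia.
- rewrite c; exact: preceqxx.
Qed.

Lemma GP_parent X m x : 1 <= x <= m -> GP X m x != x ->
  [/\ 1 <= GP X m x <= m, prec X (GP X m x) x &
      forall k, (x < k < GP X m x) || (GP X m x < k < x) -> prec X x k].
Proof.
move=> hx; case: (GP_cases X hx) => [[j hj [hPC ->]]|[_ ->]] hne.
- have [hjx hbetween _] := PC_child (ltac:(lia) : 1 <= x < j) hPC.
  split=> //; first lia.
  by move=> k /orP[hk|hk]; [exact: hbetween | lia].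
- have [_ hwnot hwstart] := wlo_spec X (i:=x) ltac:(lia).
  have hwPP : wlo X x = (PP X x).+1 by rewrite /wlo (negbTE hne).
  have hPP := PP_range X (i:=x) ltac:(lia).
  rewrite hwPP in hwnot hwstart.
  split; [lia | apply: hwstart; lia | ].
  move=> k /orP[hk|hk]; first lia.
  apply: preceq_neq; [apply/notprec/hwnot; lia | apply/eqP; lia].
Qed.

Lemma GP_shield X m x j : 1 <= x <= m -> 1 <= j <= m -> GP X m x != x ->
  prec X j x -> exists2 k, (x < k <= j) || (j <= k < x) & preceq X k (GP X m x).
Proof.
move=> hx hj hne hjx.
have [hg hgx hbetween] := GP_parent hx hne.
have hjg : ~~ ((x < j < GP X m x) || (GP X m x < j < x)).
  by apply/negP => /hbetween /(prec_asym hjx).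
have hjx' : j != x by apply: contraTneq hjx => ->; rewrite precxx.
have beyond_g : (j <= GP X m x < x) || (x < GP X m x <= j) ->
    exists2 k, (x < k <= j) || (j <= k < x) & preceq X k (GP X m x).
  by move=> hside; exists (GP X m x); [lia | exact: preceqxx].
case: (GP_cases X hx) => [[j' hj' [hPC hGP]]|[hnochild hGP]].
- case: (ltnP j x) => c; last by apply: beyond_g; lia.
  have [_ _ hscreen] := PC_child (ltac:(lia) : 1 <= x < j') hPC.
  have [k hk hkj'] := hscreen j ltac:(lia) hjx.
  by exists k; [lia | rewrite hGP; exact: prec_preceq].
- have hPP := PP_range X (i:=x) ltac:(lia).
  case: (ltnP x j) => c; last by apply: beyond_g; lia.
  have [R [hR hRx hfirst]] := first_smaller_exists c hjx.
  have [_ hRPP] := first_smaller_after (ltac:(lia) : 1 <= x) (ltac:(lia) : x < R <= m)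
    hRx hfirst hnochild.
  by exists R; [lia | rewrite hGP; exact: prec_preceq].
Qed.

Lemma GP_not_across X m x r b : 1 <= x <= m -> 1 <= r <= m -> GP X m x != x ->
  prec X r x -> prec X b x -> (x < b <= GP X m x) || (GP X m x <= b < x) ->
  (forall k, (x < k <= r) || (r <= k < x) -> prec X b k) -> False.
Proof.
move=> hx hr hne hrx hbx hb hbk.
have [hg hgx hbetween] := GP_parent hx hne.
have hbg : b = GP X m x.
  apply/eqP/negP => hneq; apply: (prec_asym hbx); apply: hbetween; lia.
have [k hk hkg] := GP_shield hx hr hne hrx.
by apply: (preceq_prec_False hkg); rewrite -hbg; apply: hbk.
Qed.

End Parents.

Fixpoint tsize (t : tree) : nat :=
  match t with Leaf => 0 | Node l r => (tsize l + tsize r).+1 end.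

Section CartesianTrees.
Variables (d : Order.disp_t) (T : orderType d).
Implicit Types P S X : nat -> T.

Lemma ct_size X f lo n : n <= f -> tsize (ct_fuel f X lo n) = n.
Proof.
elim: f lo n => [|f IH] lo n hn /=; first lia.
case: n hn => [//|n] hn /=.
have [hr _] := argmin_spec X lo (n:=n.+1) ltac:(lia).
rewrite !IH; lia.
Qed.

(* Equal Cartesian trees have equal range-minimum positions on every subrange:
   the root records the minimum, and the sizes of the subtrees locate it. *)
Lemma ct_rmq P S f lo n : n <= f ->
  ct_fuel f P lo n = ct_fuel f S lo n ->
  forall a k, lo <= a -> a + k <= lo + n -> argmin P a k = argmin S a k.
Proof.
elim: f lo n => [|f IH] lo n hn E a k ha hk.
  by have -> : k = 0 by lia.
case: k hk => [//|k] hk.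
case: n hn E hk => [|n] hn E hk; first lia.
have [hrP hallP] := argmin_spec P lo (n:=n.+1) ltac:(lia).
have [hrS hallS] := argmin_spec S lo (n:=n.+1) ltac:(lia).
move: E => /=; set rP := argmin P lo n.+1 in hrP hallP *.
set rS := argmin S lo n.+1 in hrS hallS *.
case=> EL ER.
have erS : rS = rP by have := congr1 tsize EL; rewrite !ct_size; lia.
rewrite erS in EL ER hallS.
case: (leqP (a + k.+1) rP) => h1; first by apply: (IH lo (rP - lo)) => //; lia.
case: (ltnP rP a) => h2.
  by apply: (IH rP.+1 (lo + n.+1 - rP.+1)) => //; lia.
by rewrite !(argmin_uniq (i:=rP)) //; try lia; move=> j hj; [apply: hallS|apply: hallP]; lia.
Qed.

Lemma GP_argmin X m x : 1 <= x <= m -> GP X m x != x ->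
  argmin X (minn (GP X m x) x) ((maxn (GP X m x) x - minn (GP X m x) x).+1) = GP X m x.
Proof.
move=> hx hne; have [hg hgx hbetween] := GP_parent hx hne.
apply: argmin_uniq; first lia.
move=> k hk; case: (eqVneq k (GP X m x)) => [->|hkg]; first exact: preceqxx.
apply: prec_preceq; case: (eqVneq k x) => [->//|hkx].
by apply: prec_trans hgx (hbetween k _); lia.
Qed.

(* The range [lo, lo+n) of X[1..m] is bordered when each neighbouring position
   inside [1, m] is ≺ every position of the range: these are exactly the ranges
   spanned by subtrees of CT(X). *)
Definition bordered X m lo n :=
  [/\ 1 <= lo, lo + n <= m.+1,
      1 < lo -> forall j, lo <= j < lo + n -> prec X lo.-1 j &
      lo + n <= m -> forall j, lo <= j < lo + n -> prec X (lo + n) j].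

Lemma GP_in_bordered X m lo n x r : bordered X m lo n ->
  lo <= x < lo + n -> lo <= r < lo + n -> prec X r x -> GP X m x != x ->
  lo <= GP X m x < lo + n.
Proof.
case=> hlo hhi hleft hright hx hr hrx hne.
have hx1 : 1 <= x <= m by lia.
have hr1 : 1 <= r <= m by lia.
have [hg _ _] := GP_parent hx1 hne.
case: (ltnP (GP X m x) lo) => c1.
  case: (GP_not_across (b:=lo.-1) hx1 hr1 hne hrx); [apply: hleft; lia | lia | ].
  by move=> k hk; apply: hleft; lia.
case: (ltnP (GP X m x) (lo + n)) => c2; first lia.
case: (GP_not_across (b:=lo + n) hx1 hr1 hne hrx); [apply: hright; lia | lia | ].
by move=> k hk; apply: hright; lia.
Qed.

Lemma count_lt_subpred (A : eqType) (a b : pred A) s y :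
  subpred a b -> y \in s -> b y -> ~~ a y -> count a s < count b s.
Proof.
move=> sub; elim: s => //= z s IH; rewrite in_cons => /orP[/eqP <-|ys] hby hay.
- by rewrite hby (negbTE hay) add0n add1n ltnS sub_count.
- have := IH ys hby hay; case az: (a z); last by move=> /= h; lia.
  by rewrite (sub _ az) /= ltn_add2l.
Qed.

(* Under the heap condition, the P-minimum of a bordered range is also ⪯ every
   position of the range in S: follow global parents from x, which stay in the
   range and decrease for ≺ in P, down to the P-minimum. *)
Lemma bordered_min_heap P S m lo n :
  (forall i, 1 <= i <= m -> preceq S (GP P m i) i) ->
  bordered P m lo n -> 0 < n ->
  forall x, lo <= x < lo + n -> preceq S (argmin P lo n) x.
Proof.
move=> heap hB n0; have [hlo hhi _ _] := hB.
have [hr hmin] := argmin_spec P lo n0.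
set r := argmin P lo n in hr hmin *.
pose rank x := count (prec P ^~ x) (iota 1 m).
suff H : forall N x, rank x < N -> lo <= x < lo + n -> preceq S r x.
  by move=> x; apply: H.
elim=> [|N IH] x hN hx; first lia.
case: (eqVneq x r) => [->|hxr]; first exact: preceqxx.
have hrx : prec P r x by apply: preceq_neq (hmin x hx) _; rewrite eq_sym.
have hx1 : 1 <= x <= m by lia.
case: (eqVneq (GP P m x) x) => [hroot|hne].
  by case: (preceq_prec_False (GP_root hx1 hroot (ltac:(lia) : 1 <= r <= m)) hrx).
have hg := GP_in_bordered hB hx hr hrx hne.
have [_ hgx _] := GP_parent hx1 hne.
have hrank : rank (GP P m x) < rank x.
  apply: (count_lt_subpred (y:=GP P m x)); last by rewrite /= precxx.
  - by move=> z /= hz; apply: prec_trans hz hgx.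
  - by rewrite mem_iota; lia.
  - exact: hgx.
have hgr := IH (GP P m x) ltac:(lia) hg.
exact: preceq_trans hgr (heap x hx1).
Qed.

(* Under the heap condition, P and S have the same Cartesian tree on every
   bordered range: both roots are the P-minimum, and the two subranges it
   splits off are again bordered. *)
Lemma bordered_ct P S m f lo n :
  (forall i, 1 <= i <= m -> preceq S (GP P m i) i) ->
  n <= f -> bordered P m lo n -> ct_fuel f P lo n = ct_fuel f S lo n.
Proof.
move=> heap; elim: f lo n => [|f IH] lo n hn hB //=.
case: n hn hB => [//|n] hn hB.
have [hr hall] := argmin_spec P lo (n:=n.+1) ltac:(lia).
have -> : argmin S lo n.+1 = argmin P lo n.+1.
  by apply: argmin_uniq; [lia | exact: bordered_min_heap heap hB _].
set r := argmin P lo n.+1 in hr hall *.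
case: hB => [hlo hhi hL hR].
have hrj : forall j, lo <= j < lo + n.+1 -> j != r -> prec P r j.
  by move=> j hj hne; apply: preceq_neq; [apply: hall|rewrite eq_sym].
congr Node; apply: IH; try lia; split; try lia.
- by move=> h2 j hj; apply: hL; lia.
- move=> _ j hj; have -> : lo + (r - lo) = r by lia.
  by apply: hrj; [lia | apply/eqP; lia].
- by move=> _ j hj; apply: hrj; [lia | apply/eqP; lia].
- move=> h j hj; have -> : r.+1 + (lo + n.+1 - r.+1) = lo + n.+1 by lia.
  by apply: hR; lia.
Qed.

End CartesianTrees.

Theorem theorem3 (d : Order.disp_t) (T : orderType d) (m : nat)
    (P S : nat -> T) :
  CT P m = CT S m <->
  (forall i : nat, (1 <= i <= m)%N -> preceq S (GP P m i) i).
Proof.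
split.
- move=> E i hi; case: (eqVneq (GP P m i) i) => [->|hne]; first exact: preceqxx.
  have [hg _ _] := GP_parent hi hne.
  set a := minn (GP P m i) i; set n := (maxn (GP P m i) i - a).+1.
  have eS := ct_rmq (leqnn m) E (a:=a) (k:=n) ltac:(lia) ltac:(lia).
  rewrite GP_argmin // in eS.
  have [_ hmin] := argmin_spec S a (n:=n) ltac:(lia).
  by rewrite -eS in hmin; apply: hmin; lia.
- move=> heap; apply: bordered_ct heap (leqnn m) _.
  by split=> //; lia.
Qed.
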